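(* Let $T$ be a complete o-minimal theory expanding the theory of real closed ordered fields. Let $(\mathbb{U},\mathcal{O}')\models T_{\mathrm{convex}}$, let $\mathbb{E}\preceq\mathbb{E}_1\prec\mathbb{U}$ with $\mathbb{E}\not\subseteq\mathcal{O}'$, and let $x\in\mathbb{U}\setminus\mathbb{E}$. Set $\mathcal{O}:=\mathcal{O}'\cap\mathbb{E}$ and $\mathcal{O}_1:=\mathcal{O}'\cap\mathbb{E}_1$. Suppose that no element of $\mathbb{E}_1$ realizes $\mathrm{tp}(x/\mathbb{E})$ (the type in the sense of $T$). Then $x$ is weakly immediate over $(\mathbb{E},\mathcal{O})$ if and only if it is weakly immediate over $(\mathbb{E}_1,\mathcal{O}_1)$. If this is the case, then $\mathrm{tp}(x/(\mathbb{E},\mathcal{O}))$ and $\mathrm{tp}(x/(\mathbb{E}_1,\mathcal{O}_1))$ have the same cofinality.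
   Context: $T_{\mathrm{convex}}$ is the theory of pairs $(\mathbb{U},\mathcal{O}')$ with $\mathbb{U}\models T$ and $\mathcal{O}'\ne\mathbb{U}$ a convex subring closed under all continuous $\emptyset$-definable functions. For $\mathbb{F}\preceq\mathbb{U}$, $x$ is weakly immediate over $(\mathbb{F},\mathcal{O}'\cap\mathbb{F})$ if $\{\mathrm{val}_{\mathcal{O}'}(x-c):c\in\mathbb{F}\}$ has no maximum; the cofinality of its type is the cofinality of this ordered set. *)

From HB Require Import structures.
From mathcomp Require Import all_boot all_order all_algebra.
Set Implicit Arguments. Unset Strict Implicit. Unset Printing Implicit Defensive.
Import Order.TTheory GRing.Theory Num.Theory.
Local Open Scope ring_scope.

(* An o-minimal expansion of a real closed field R, presented (as in
   van den Dries, "Tame topology and o-minimal structures") by its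
   collection of 0-definable sets: [dsets n A] means that A, a set of
   lists of length n over R, is 0-definable. *)
Record omin_struct (R : rcfType) := OMinStruct {
  dsets : nat -> (seq R -> Prop) -> Prop;
  ds_ext : forall n (A B : seq R -> Prop), dsets n A ->
    (forall s, A s <-> B s) -> dsets n B;
  ds_size : forall n A s, dsets n A -> A s -> size s = n;
  ds_full : forall n, dsets n (fun s => size s = n);
  ds_compl : forall n A, dsets n A -> dsets n (fun s => size s = n /\ ~ A s);
  ds_union : forall n A B, dsets n A -> dsets n B ->
    dsets n (fun s => A s \/ B s);
  ds_prod : forall n m A B, dsets n A -> dsets m B ->
    dsets (n + m) (fun s => A (take n s) /\ B (drop n s));
  ds_diag : forall n i j, (i < n)%N -> (j < n)%N ->
    dsets n (fun s => size s = n /\ nth 0 s i = nth 0 s j);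
  ds_proj : forall n A, dsets n.+1 A ->
    dsets n (fun s => exists y, A (rcons s y));
  ds_lt : dsets 2 (fun s => exists a b, s = [:: a; b] /\ a < b);
  ds_add : dsets 3 (fun s => exists a b, s = [:: a; b; a + b]);
  ds_mul : dsets 3 (fun s => exists a b, s = [:: a; b; a * b]);
  ds_omin : forall n A (e : seq R), dsets n.+1 A -> size e = n ->
    exists l : seq (interval R),
      forall y, A (rcons e y) <-> has (fun i => y \in i) l
}.

Section Defs.
Variables (R : rcfType) (M : omin_struct R).

Definition tuple_in (E : R -> Prop) (e : seq R) := forall a, a \in e -> E a.

(* E (a subset of the model) is the universe of an elementary substructure
   (Tarski--Vaught test: every nonempty set definable with parameters in E
   has a point in E). *)
Definition elem_sub (E : R -> Prop) :=
  forall n A (e : seq R), dsets M n.+1 A -> size e = n -> tuple_in E e ->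
    (exists y, A (rcons e y)) -> exists y, E y /\ A (rcons e y).

Definition realizes_type (E : R -> Prop) (x y : R) :=
  forall n A (e : seq R), dsets M n.+1 A -> size e = n -> tuple_in E e ->
    (A (rcons e y) <-> A (rcons e x)).

Definition continuous_fun (f : R -> R) :=
  forall a eps, 0 < eps ->
    exists2 d, 0 < d & forall b, `|b - a| < d -> `|f b - f a| < eps.

Definition Tconvex (O : R -> Prop) :=
  O 0 /\ O 1 /\
  (forall a b, O a -> O b -> O (a - b)) /\
  (forall a b, O a -> O b -> O (a * b)) /\
  (forall a b c, O a -> O c -> (a <= b) -> (b <= c) -> O b) /\
  (exists a, ~ O a) /\
  (forall f, continuous_fun f ->
     dsets M 2 (fun s => exists a, s = [:: a; f a]) ->
     forall a, O a -> O (f a)).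

(* valuation order of O: val a <= val b  iff  b = o * a for some o in O *)
Definition vle (O : R -> Prop) (a b : R) := exists2 o, O o & b = o * a.

Definition weakly_immediate (O : R -> Prop) (F : R -> Prop) (x : R) :=
  ~ exists c, F c /\ forall c', F c' -> vle O (x - c') (x - c).

Definition cofinal_in (O : R -> Prop) (F : R -> Prop) (x : R) (C : R -> Prop) :=
  (forall c, C c -> F c) /\
  forall c', F c' -> exists c, C c /\ vle O (x - c') (x - c).

Definition card_le (C1 C2 : R -> Prop) :=
  exists f : R -> R, (forall a, C1 a -> C2 (f a)) /\
    (forall a b, C1 a -> C1 b -> f a = f b -> a = b).

Definition cof_le (O : R -> Prop) (x : R) (F1 F2 : R -> Prop) :=
  forall C2, cofinal_in O F2 x C2 ->
    exists C1, cofinal_in O F1 x C1 /\ card_le C1 C2.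

Definition same_cof (O : R -> Prop) (x : R) (F1 F2 : R -> Prop) :=
  cof_le O x F1 F2 /\ cof_le O x F2 F1.

End Defs.

(* If some c1 in E1 were closer to x than every point of E, in the sense of
   val(x - .), then by convexity of O' no point of E would lie between c1 and x.
   But in an o-minimal structure two points not separated by an elementary
   substructure E have the same type over E: for a set defined with parameters
   from E, the points where its fibre is not locally constant form a finite
   E-definable set, hence lie in E, and away from them the fibre is locally
   constant, hence constant on any segment avoiding them.  So c1 would realize
   tp(x/E).  Thus E is cofinal in E1 for val(x - .), which transfers both weak
   immediacy and the cofinality. *)

From mathcomp Require Import all_boot all_order all_algebra zify lra.
From Stdlib Require Import Classical ClassicalEpsilon.
Set Implicit Arguments. Unset Strict Implicit. Unset Printing Implicit Defensive.
Import Order.TTheory GRing.Theory Num.Theory.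
Local Open Scope ring_scope.

Section PiecewiseConstant.
Variable R : realFieldType.
Implicit Types (P : R -> Prop) (L : seq R).

Definition locally_const P t :=
  exists u w, u < t /\ t < w /\ forall v, u < v -> v < w -> (P v <-> P t).

Definition const_off L P := forall a b v v',
  (forall k, k \in L -> ~ (a < k < b)) -> a < v < b -> a < v' < b -> (P v <-> P v').

Lemma const_off_eq_mem L L' P : L =i L' -> const_off L P -> const_off L' P.
Proof. by move=> eqL hP a b v v' hL; apply: hP => k; rewrite eqL; apply: hL. Qed.

Lemma const_off_drop k L P :
  const_off (k :: L) P -> locally_const P k -> const_off L P.
Proof.
move=> hP [u [w [uk [kw hk]]]] a b v v' hL hv hv'.
have [/andP[ak kb] | nakb] := boolP (a < k < b); last first.
  apply: hP hv hv' => k'; rewrite inE => /orP[/eqP -> | /hL //]; exact/negP.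
have hLl k' : k' \in k :: L -> ~ (a < k' < k).
  rewrite inE => /orP[/eqP -> | /hL hk']; first by rewrite ltxx andbF.
  by move=> /andP[ak' k'k]; apply: hk'; rewrite ak' (lt_trans k'k kb).
have hLr k' : k' \in k :: L -> ~ (k < k' < b).
  rewrite inE => /orP[/eqP -> | /hL hk']; first by rewrite ltxx.
  by move=> /andP[kk' k'b]; apply: hk'; rewrite k'b (lt_trans ak kk').
have toK z : a < z < b -> (P z <-> P k).
  move=> /andP[az zb]; case: (ltgtP z k) => [zk | kz | ->]; last by [].
  - case: (ltP u z) => uz; first exact: hk uz (lt_trans zk kw).
    have := hk ((u + k) / 2) ltac:(lra) ltac:(lra).
    have := hP a k z ((u + k) / 2) hLl ltac:(apply/andP; lra) ltac:(apply/andP; lra).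
    tauto.
  - case: (ltP z w) => zw; first exact: hk (lt_trans uk kz) zw.
    have := hk ((k + w) / 2) ltac:(lra) ltac:(lra).
    have := hP k b z ((k + w) / 2) hLr ltac:(apply/andP; lra) ltac:(apply/andP; lra).
    tauto.
have := toK v hv; have := toK v' hv'; tauto.
Qed.

Lemma exists_gap L a b : (forall k, k \in L -> ~ (a <= k <= b)) ->
  exists u w, u < a /\ b < w /\ forall k, k \in L -> ~ (u < k < w).
Proof.
elim: L => [_ | k L IH hL].
  by exists (a - 1), (b + 1); split; [lra | split; [lra | by []]].
have [u [w [ua [bw huw]]]] : exists u w, u < a /\ b < w /\
    forall k, k \in L -> ~ (u < k < w).
  by apply: IH => k' k'L; apply: hL; rewrite inE k'L orbT.
have /negP := hL k (mem_head _ _); rewrite negb_and -!ltNge => /orP[ka | bk].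
- have [ku | uk] := leP k u.
    exists u, w; split=> //; split=> // k'.
    by rewrite inE => /orP[/eqP -> /andP[] | /huw //]; lra.
  exists k, w; split=> //; split=> // k'.
  rewrite inE => /orP[/eqP -> | k'L /andP[kk' k'w]]; first by rewrite ltxx.
  by apply: (huw k' k'L); apply/andP; lra.
- have [wk | kw] := leP w k.
    exists u, w; split=> //; split=> // k'.
    by rewrite inE => /orP[/eqP -> /andP[] | /huw //]; lra.
  exists u, k; split=> //; split=> // k'.
  rewrite inE => /orP[/eqP -> | k'L /andP[uk' k'k]]; first by rewrite ltxx andbF.
  by apply: (huw k' k'L); apply/andP; lra.
Qed.

Lemma locally_const_notin L P t : const_off L P -> t \notin L -> locally_const P t.
Proof.
move=> hP tL.
have [|u [w [ut [tw huw]]]] := @exists_gap L t t.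
  by move=> k kL; rewrite -eq_le => /eqP tk; move: tL; rewrite tk kL.
exists u, w; do 2!split => //; move=> v uv vw.
by apply: (hP u w) => //; apply/andP.
Qed.

Lemma const_off_segment L P a b : const_off L P -> a <= b ->
  (forall k, k \in L -> a <= k <= b -> locally_const P k) -> (P a <-> P b).
Proof.
(* L1 collects the breakpoints already known to lie outside [a, b]. *)
move=> + ab; suff gen L1 : const_off (L ++ L1) P ->
    (forall k, k \in L -> a <= k <= b -> locally_const P k) ->
    (forall k, k \in L1 -> ~ (a <= k <= b)) -> (P a <-> P b).
  by move=> hP hL; apply: (gen [::]); rewrite ?cats0.
elim: L L1 => [|k L IH] L1 /= hP hL hL1.
  have [u [w [ua [bw huw]]]] := exists_gap hL1.
  by apply: (hP u w) => //; apply/andP; lra.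
have hL' k' : k' \in L -> a <= k' <= b -> locally_const P k'.
  by move=> k'L; apply: hL; rewrite inE k'L orbT.
have [hk | hk] := boolP (a <= k <= b).
  exact: IH (const_off_drop hP (hL k (mem_head _ _) hk)) hL' hL1.
apply: (IH (k :: L1)) => //.
  by apply: const_off_eq_mem hP => z; rewrite !(inE, mem_cat) orbCA.
by move=> k'; rewrite inE => /orP[/eqP -> | /hL1 //]; exact/negP.
Qed.

Lemma lteif_const_off (C : bool) (c a b v v' : R) :
  ~ (a < c < b) -> a < v < b -> a < v' < b ->
  ((c < v ?<= if C) = (c < v' ?<= if C)) /\ ((v < c ?<= if C) = (v' < c ?<= if C)).
Proof.
move=> hc /andP[av vb] /andP[av' v'b].
have {}hc : c <= a \/ b <= c.
  case: (leP c a) => ca; [by left | right].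
  by rewrite leNgt; apply/negP => cb; apply: hc; rewrite ca cb.
by case: C => /=; split; apply/idP/idP; case: hc; lra.
Qed.

Definition bound_point (l : itv_bound R) : seq R :=
  if l is BSide _ c then [:: c] else [::].

Definition itv_ends (i : interval R) : seq R :=
  let: Interval l u := i in bound_point l ++ bound_point u.

Lemma const_off_itv (i : interval R) : const_off (itv_ends i) (fun v => v \in i).
Proof.
case: i => l u a b v v' hk hv hv'.
suff -> : (v \in Interval l u) = (v' \in Interval l u) by [].
rewrite !in_itv; congr (_ && _).
- case: l hk => [C c | C] //= hk.
  by have [-> _] := lteif_const_off C (hk c (mem_head _ _)) hv hv'.
- case: u hk => [C c | C] //= hk.
  have /hk hc : c \in bound_point l ++ [:: c] by rewrite mem_cat mem_head orbT.
  by have [_ ->] := lteif_const_off (~~ C) hc hv hv'.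
Qed.

Lemma const_off_itvs (l : seq (interval R)) :
  const_off (flatten [seq itv_ends i | i <- l]) (fun v => has (fun i => v \in i) l).
Proof.
move=> a b v v' hk hv hv'.
suff -> : has (fun i => v \in i) l = has (fun i => v' \in i) l by [].
apply: eq_in_has => i il /=.
have hki : forall k, k \in itv_ends i -> ~ (a < k < b).
  by move=> k ki; apply: hk; apply/flatten_mapP; exists i.
have [hvv' hv'v] := const_off_itv hki hv hv'.
by apply/idP/idP => [/hvv' | /hv'v].
Qed.

End PiecewiseConstant.

Section DefinableSets.
Variables (R : rcfType) (M : omin_struct R).
Local Notation D := (dsets M).

Lemma ds_and n A B : D n A -> D n B -> D n (fun s => A s /\ B s).
Proof.
move=> hA hB; apply: (ds_ext (ds_compl (ds_union (ds_compl hA) (ds_compl hB)))) => s.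
split=> [[sn nAB] | [As Bs]].
- by split; apply: NNPP => ?; apply: nAB; tauto.
- by split; [exact: ds_size hA As | tauto].
Qed.

Lemma ds_impl n A B : D n A -> D n B -> D n (fun s => size s = n /\ (A s -> B s)).
Proof.
move=> hA hB.
apply: (ds_ext (ds_and (ds_full M n) (ds_union (ds_compl hA) hB))) => s; split.
- move=> [hs [[_ h]|h]]; split => //; tauto.
- move=> [hs h]; split => //; case: (classic (A s)); tauto.
Qed.

Lemma ds_iff n A B : D n A -> D n B -> D n (fun s => size s = n /\ (A s <-> B s)).
Proof.
move=> hA hB.
apply: (ds_ext (ds_and (ds_impl hA hB) (ds_impl hB hA))) => s; tauto.
Qed.

Lemma ds_all n A : D n.+1 A -> D n (fun s => size s = n /\ forall y, A (rcons s y)).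
Proof.
move=> hA.
apply: (ds_ext (ds_compl (ds_proj (ds_compl hA)))) => s; split.
- move=> [hs hn]; split => // y; apply: NNPP => h; apply: hn; exists y.
  by rewrite size_rcons hs.
- move=> [hs h]; split => //; move=> [y [_ hy]]; exact: hy.
Qed.

Lemma ds_projs n m B : D (n + m) B ->
  D n (fun s => exists r, size r = m /\ B (s ++ r)).
Proof.
elim: m B => [|m IH] B hB.
  rewrite addn0 in hB; apply: (ds_ext hB) => s; split.
  - by move=> h; exists [::]; rewrite cats0.
  - by move=> [r [/size0nil -> ]]; rewrite cats0.
rewrite addnS in hB.
apply: (ds_ext (IH _ (ds_proj hB))) => s; split.
- move=> [r [hr [y hy]]]; exists (rcons r y); split; first by rewrite size_rcons hr.
  by rewrite -rcons_cat.
- move=> [r [hr h]]; case/lastP: r hr h => [|r y]; first by [].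
  rewrite size_rcons => -[hr] h; exists r; split => //; exists y.
  by rewrite rcons_cat.
Qed.

Lemma ds_bigand k m (Dj : nat -> seq R -> Prop) :
  (forall j, (j < m)%N -> D k (Dj j)) ->
  D k (fun s => size s = k /\ forall j, (j < m)%N -> Dj j s).
Proof.
elim: m => [|m IH] h.
  apply: (ds_ext (ds_full M k)) => s; split; [move=> ->; split => // | by case].
apply: (ds_ext (ds_and (IH (fun j hj => h j (ltnW hj))) (h m (ltnSn m)))) => s; split.
- move=> [[hs H] hm]; split => // j; rewrite ltnS leq_eqVlt => /orP[/eqP -> //|].
  exact: H.
- move=> [hs H]; split; last exact: H.
  by split => // j hj; apply: H; apply: ltnW.
Qed.

Lemma nth_cat_size (e l : seq R) k : nth 0 (e ++ l) (size e + k) = nth 0 l k.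
Proof. by rewrite nth_cat ltnNge leq_addr /= addKn. Qed.

Lemma nth_cat_size0 (e l : seq R) : nth 0 (e ++ l) (size e) = nth 0 l 0.
Proof. by rewrite -[size e]addn0 nth_cat_size. Qed.

Lemma ds_pull m A (idx : seq nat) n : D m A -> size idx = m ->
  (forall i, i \in idx -> (i < n)%N) ->
  D n (fun s => size s = n /\ A (map (nth 0 s) idx)).
Proof.
move=> hA idxm idxn.
have idx_lt j : (j < m)%N -> (nth 0%N idx j < n)%N.
  by move=> jm; apply/idxn/mem_nth; rewrite idxm.
pose copies (s : seq R) j :=
  size s = (n + m)%N /\ nth 0 s (n + j) = nth 0 s (nth 0%N idx j).
have hD : D (n + m) (fun s => (size (take n s) = n /\ A (drop n s)) /\
    (size s = (n + m)%N /\ forall j, (j < m)%N -> copies s j)).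
  apply: ds_and; first exact: ds_prod (ds_full M n) hA.
  by apply: ds_bigand => j jm; apply: ds_diag; [lia | have := idx_lt j jm; lia].
apply: (ds_ext (ds_projs hD)) => s; split.
- move=> [r [rm [[_ Ar] [srm hr]]]].
  have sn : size s = n by move: srm; rewrite size_cat rm; lia.
  suff <- : r = map (nth 0 s) idx by move: Ar; rewrite drop_size_cat.
  apply: (@eq_from_nth _ 0); first by rewrite size_map idxm rm.
  rewrite rm => j jm; have [_] := hr j jm.
  by rewrite (nth_map 0%N) ?idxm // -sn nth_cat_size nth_cat sn idx_lt.
- move=> [sn As]; exists (map (nth 0 s) idx); split; first by rewrite size_map.
  rewrite take_size_cat ?drop_size_cat // size_cat size_map sn idxm.
  split=> //; split=> // j jm; split; first by rewrite size_cat size_map sn idxm.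
  by rewrite -sn nth_cat_size (nth_map 0%N) ?idxm // nth_cat sn idx_lt.
Qed.

Lemma ds_fiber_nth n m k A : D n.+1 A -> (n <= m)%N -> (k < m)%N ->
  D m (fun s => size s = m /\ A (rcons (take n s) (nth 0 s k))).
Proof.
move=> hA nm km.
have hidx : forall i, i \in iota 0 n ++ [:: k] -> (i < m)%N.
  by move=> i; rewrite mem_cat mem_iota inE => /orP[|/eqP ->] //; lia.
apply: (ds_ext (ds_pull hA _ hidx)); first by rewrite size_cat size_iota addn1.
move=> s; split=> -[sm hs]; split=> //; move: hs;
  by rewrite map_cat map_nth_iota0 ?sm // cats1.
Qed.

Lemma ds_nth_lt m i j : (i < m)%N -> (j < m)%N ->
  D m (fun s => size s = m /\ nth 0 s i < nth 0 s j).
Proof.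
move=> im jm.
have hidx : forall k, k \in [:: i; j] -> (k < m)%N.
  by move=> k; rewrite !inE => /orP[]/eqP->.
apply: (ds_ext (ds_pull (ds_lt M) _ hidx)) => // s /=; split.
- by move=> [sm [a [b [[-> ->] ab]]]].
- by move=> [sm ij]; split => //; exists (nth 0 s i), (nth 0 s j).
Qed.

Lemma ds_locally_const n A : D n.+1 A -> exists2 B, D n.+1 B &
  forall e t, size e = n -> (B (rcons e t) <-> locally_const (fun v => A (rcons e v)) t).
Proof.
move=> hA.
(* a point s of n.+4-space is read as e ++ [:: t; u; w; v] *)
pose At k s := A (rcons (take n s) (nth 0 s k)).
pose S4 s := size s = n.+4 /\ (nth 0 s (n + 1) < nth 0 s (n + 3) < nth 0 s (n + 2) ->
  (At (n + 3)%N s <-> At n s)).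
have hS4 : D n.+4 S4.
  have hlt := ds_and (@ds_nth_lt n.+4 (n + 1) (n + 3) ltac:(lia) ltac:(lia))
                     (@ds_nth_lt n.+4 (n + 3) (n + 2) ltac:(lia) ltac:(lia)).
  have hiff := ds_iff (@ds_fiber_nth n n.+4 (n + 3) A hA ltac:(lia) ltac:(lia))
                      (@ds_fiber_nth n n.+4 n A hA ltac:(lia) ltac:(lia)).
  apply: (ds_ext (ds_impl hlt hiff)) => s; rewrite /S4 /At.
  split=> -[sn h]; split=> //.
  - by move=> /andP[uv vw]; have [_] := h (conj (conj sn uv) (conj sn vw)); tauto.
  - by move=> [[_ uv] [_ vw]]; split=> //; have := h ltac:(by rewrite uv vw); tauto.
have hS3 := ds_and (ds_and (@ds_nth_lt n.+3 (n + 1) n ltac:(lia) ltac:(lia))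
                           (@ds_nth_lt n.+3 n (n + 2) ltac:(lia) ltac:(lia)))
                   (ds_all hS4).
eexists; first exact: ds_proj (ds_proj hS3).
move=> e t en; subst n.
have cat3 u w : rcons (rcons (rcons e t) u) w = e ++ [:: t; u; w].
  by rewrite -!cats1 -!catA.
have cat4 u w v : rcons (e ++ [:: t; u; w]) v = e ++ [:: t; u; w; v].
  by rewrite -cats1 -catA.
have S4E u w v : S4 (e ++ [:: t; u; w; v]) <->
    (u < v < w -> (A (rcons e v) <-> A (rcons e t))).
  rewrite /S4 /At size_cat take_size_cat // !nth_cat_size nth_cat_size0 /=.
  by rewrite addn4; split=> [[] | ] //.
split.
- move=> [u [w]]; rewrite cat3 !nth_cat_size nth_cat_size0 /=.
  move=> -[[[_ ut] [_ tw]] [_ huw]].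
  exists u, w; do 2!split=> //; move=> v uv vw.
  by have := huw v; rewrite cat4 S4E uv vw; apply.
- move=> [u [w [ut [tw huw]]]]; exists u, w.
  rewrite cat3 !nth_cat_size nth_cat_size0 size_cat addn3 /=.
  split; first by split; split.
  by split=> // v; rewrite cat4 S4E => /andP[]; exact: huw.
Qed.

Lemma ds_fiber_remove n A : D n.+1 A -> exists2 A', D n.+2 A' &
  forall e b t, size e = n -> (A' (rcons (rcons e b) t) <-> A (rcons e t) /\ t <> b).
Proof.
move=> hA.
have hneq := ds_compl (@ds_diag _ M n.+2 n (n + 1) ltac:(lia) ltac:(lia)).
have hfib := @ds_fiber_nth n n.+2 (n + 1) A hA ltac:(lia) ltac:(lia).
eexists; first exact: ds_and hfib hneq.
move=> e b t en; subst n.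
have -> : rcons (rcons e b) t = e ++ [:: b; t] by rewrite -!cats1 -catA.
rewrite take_size_cat // nth_cat_size nth_cat_size0 size_cat addn2 /=.
split=> [[[_ At] [_ tb]] | [At tb]].
- by split=> // bt; apply: tb.
- by split; split=> // -[_ bt]; apply: tb.
Qed.

Lemma elem_sub_finite E n A e (L : seq R) : elem_sub M E -> D n.+1 A -> size e = n ->
  tuple_in E e -> (forall t, A (rcons e t) -> t \in L) -> forall t, A (rcons e t) -> E t.
Proof.
move=> HE; have [N] := ubnP (size L).
elim: N => // N IH in n A e L *; rewrite ltnS => LN hA en eE AL t At.
have [b [Eb Ab]] := HE n A e hA en eE (ex_intro _ t At).
have [-> // | tb] := eqVneq t b.
have [A' hA' A'E] := ds_fiber_remove hA.
apply: (IH _ _ (rcons e b) (filter (predC1 b) L) _ hA').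
- rewrite size_filter; apply: leq_trans LN.
  rewrite -[X in (_ < X)%N](count_predC (predC1 b)) -[X in (X < _)%N]addn0 ltn_add2l.
  by rewrite -has_count; apply/hasP; exists b; rewrite ?AL //= negbK.
- by rewrite size_rcons en.
- by move=> a; rewrite mem_rcons inE => /orP[/eqP -> // | ]; apply: eE.
- move=> t'; rewrite A'E // => -[/AL t'L t'b].
  by rewrite mem_filter /= t'L andbT; apply/eqP.
- by rewrite A'E //; split=> //; apply/eqP.
Qed.

Lemma realizes_type_gap E a b : elem_sub M E -> a <= b ->
  (forall c, E c -> ~ (a <= c <= b)) -> realizes_type M E b a.
Proof.
move=> HE ab gap n A e hA en eE.
have [l hl] := ds_omin hA en.
pose L := flatten [seq itv_ends i | i <- l].
have hP : const_off L (fun v => A (rcons e v)).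
  by move=> a' b' v v' hk hv hv'; rewrite !hl; apply: const_off_itvs hk hv hv'.
apply: (const_off_segment hP ab) => k _ abk; apply: NNPP => nlc.
have [B hB BE] := ds_locally_const hA.
suff Ek : E k by apply: gap k Ek abk.
apply: (elem_sub_finite (L := L) HE (ds_compl hB) en eE).
- move=> t [_ /(BE e t en) nlct]; apply: NNPP => /negP tL.
  exact/nlct/(locally_const_notin hP).
- by split; [rewrite size_rcons en | rewrite BE].
Qed.

Lemma realizes_type_sym E x y : realizes_type M E x y -> realizes_type M E y x.
Proof. by move=> hxy n A e hA en eE; apply: iff_sym (hxy n A e hA en eE). Qed.

Lemma elem_sub_meets_segment E x y : elem_sub M E -> ~ realizes_type M E x y ->
  exists2 c, E c & (y <= c <= x) || (x <= c <= y).
Proof.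
move=> HE nxy; apply: NNPP => nomeet.
case: (leP y x) => yx; apply: nxy.
- by apply: realizes_type_gap HE yx _ => c Ec hc; apply: nomeet; exists c; rewrite ?hc.
- apply: realizes_type_sym; apply: realizes_type_gap HE (ltW yx) _ => c Ec hc.
  by apply: nomeet; exists c; rewrite ?hc ?orbT.
Qed.

End DefinableSets.

Section Valuation.
Variables (R : rcfType) (O : R -> Prop).
Hypothesis OM : forall a b, O a -> O b -> O (a * b).

Lemma vle_trans a b c : vle O a b -> vle O b c -> vle O a c.
Proof.
by move=> [o1 h1 ->] [o2 h2 ->]; exists (o2 * o1); rewrite ?mulrA //; apply: OM.
Qed.

Hypotheses (O0 : O 0) (O1 : O 1)
  (O_convex : forall a b c, O a -> O c -> a <= b -> b <= c -> O b).

Lemma vle_closer x a c : (a <= c <= x) || (x <= c <= a) -> vle O (x - a) (x - c).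
Proof.
have [-> | ax] := eqVneq a x.
  by rewrite orbb -eq_le => /eqP <-; exists 1; rewrite ?mul1r.
move=> hc; exists ((x - c) / (x - a)); last by rewrite divfK // subr_eq0 eq_sym.
have hxa : (x - c) / (x - a) * (x - a) = x - c by rewrite divfK // subr_eq0 eq_sym.
apply: (O_convex O0 O1); case/orP: hc ax => /andP[h1 h2]; rewrite neq_lt => /orP[] ?; nra.
Qed.

End Valuation.

Lemma card_le_image (R : rcfType) (C : R -> Prop) (g : R -> R) :
  card_le (fun c => exists2 c2, C c2 & c = g c2) C.
Proof.
have [f hf] : exists f : R -> R, forall c,
    (exists2 c2, C c2 & c = g c2) -> C (f c) /\ c = g (f c).
  apply: (ClassicalEpsilon.choice
    (fun c c' => (exists2 c2, C c2 & c = g c2) -> C c' /\ c = g c')) => c.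
  have [[c2 Cc2 ->] | nc] := classic (exists2 c2, C c2 & c = g c2).
    by exists c2.
  by exists c.
exists f; split=> [c /hf [] // | a b /hf [_ ea] /hf [_ eb] fab].
by rewrite ea eb fab.
Qed.

Section Domination.
Variables (R : rcfType) (O F F1 : R -> Prop) (x : R).
Hypotheses (OM : forall a b, O a -> O b -> O (a * b)) (FF1 : forall c, F c -> F1 c)
  (F_dominates : forall c1, F1 c1 -> exists2 c, F c & vle O (x - c1) (x - c)).

Lemma weakly_immediate_dominated : weakly_immediate O F x <-> weakly_immediate O F1 x.
Proof.
split=> wF [c [Fc cmax]]; apply: wF.
- have [c' Fc' cc'] := F_dominates Fc.
  by exists c'; split=> // c'' /FF1 /cmax c''c; exact: (vle_trans OM c''c cc').
- exists c; split; first exact: FF1.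
  by move=> c1 /F_dominates [c' /cmax c'c c1c']; exact: (vle_trans OM c1c' c'c).
Qed.

Lemma same_cof_dominated : same_cof O x F F1.
Proof.
split=> C [CF Ccof].
- have [g hg] : exists g : R -> R, forall c1,
      F1 c1 -> F (g c1) /\ vle O (x - c1) (x - g c1).
    apply: (ClassicalEpsilon.choice
      (fun c1 c => F1 c1 -> F c /\ vle O (x - c1) (x - c))) => c1.
    have [/F_dominates [c Fc hc] | nF1] := classic (F1 c1); first by exists c.
    by exists c1.
  exists (fun c => exists2 c2, C c2 & c = g c2); split; last exact: card_le_image.
  split=> [c [c2 /CF /hg [Fg _] ->] // | c /FF1 /Ccof [c2 [Cc2 cc2]]].
  exists (g c2); split; first by exists c2.
  exact: (vle_trans OM cc2 (hg c2 (CF c2 Cc2)).2).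
- exists C; split; last by exists id.
  split=> [c /CF /FF1 // | c1 /F_dominates [c /Ccof [c2 [Cc2 cc2]] c1c]].
  by exists c2; split=> //; exact: (vle_trans OM c1c cc2).
Qed.

End Domination.

Theorem lemma3p19 (R : rcfType) (M : omin_struct R) (O' E E1 : R -> Prop) (x : R) :
  Tconvex M O' ->
  elem_sub M E -> elem_sub M E1 -> (forall a, E a -> E1 a) ->
  (exists a, ~ E1 a) ->
  (exists a, E a /\ ~ O' a) ->
  ~ E x ->
  ~ (exists y, E1 y /\ realizes_type M E x y) ->
  (weakly_immediate O' E x <-> weakly_immediate O' E1 x) /\
  (weakly_immediate O' E x -> same_cof O' x E E1).
Proof.
(* Of the remaining hypotheses none is needed: only that O' is a convex
   multiplicatively closed set containing 0 and 1 enters. *)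
move=> [O0 [O1 [_ [OM [O_convex _]]]]] HE _ EE1 _ _ _ no_realization.
have E_dominates c1 : E1 c1 -> exists2 c, E c & vle O' (x - c1) (x - c).
  move=> E1c1; have [|c Ec hc] := @elem_sub_meets_segment _ M E x c1 HE.
    by move=> real; apply: no_realization; exists c1.
  by exists c => //; apply: vle_closer.
split; first exact: weakly_immediate_dominated OM EE1 E_dominates.
by move=> _; apply: same_cof_dominated.
Qed.
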